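(* Let $\Phi=\{\phi_j\}$ be an orthonormal basis of $L^2([0,1],\mu)$, let $A>0$, $k>1/2$, and let $C\ge A^2/(2k-1)$. Then $$\mathcal{E}_k(\Phi,A)\subseteq\Theta_k(\Phi,A,C)\subseteq\mathcal{A}_k(\Phi,A,C).$$
   Context: Each $f\in L^2([0,1],\mu)$ is written $f=\sum_j\theta_j\phi_j$. $\mathcal{E}_k(\Phi,A)=\{f:|\theta_j|\le Aj^{-k}\ \forall j\ge1\}$. $\Theta_k(\Phi,A,C)$ is the set of $f$ whose coefficients' non-increasing rearrangement by absolute value $\{\theta_{(j)}\}$ satisfies $|\theta_{(j)}|\le Aj^{-k}$ for all $j\ge1$ and with $\sum_{j=J+1}^\infty\theta_j^2\le CJ^{-2k+1}$ for all $J\ge1$. $\mathcal{A}_k(\Phi,A,C)=\{f:|\theta_1|\le A,\ \sum_{j=J+1}^\infty\theta_j^2\le CJ^{-2k+1}\ \forall J\ge1\}$. *)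

From mathcomp Require Import all_boot all_order all_algebra.
From mathcomp Require Import all_classical all_reals all_analysis.
Set Implicit Arguments. Unset Strict Implicit. Unset Printing Implicit Defensive.
Import Order.TTheory GRing.Theory Num.Theory.
Local Open Scope classical_set_scope.
Local Open Scope ring_scope.

(* Indexing convention: a coefficient sequence th : nat -> R stores
   theta_{n+1} at index n, i.e. th 0 = theta_1, th 1 = theta_2, ... *)

Definition few_exceed (R : realType) (th : nat -> R) (t : R) (n : nat) : Prop :=
  exists s : seq nat, (size s <= n)%N /\ (forall i, t < `|th i| -> i \in s).

(* Non-increasing rearrangement of |th| (distribution-function definition):
   rearr th n = |theta_{(n+1)}|, the (n+1)-th largest absolute value,
   = inf { t >= 0 | #{i : |th i| > t} <= n }. *)
Definition rearr (R : realType) (th : nat -> R) (n : nat) : R :=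
  inf [set t : R | 0 <= t /\ few_exceed th t n].

Definition tail_bound (R : realType) (th : nat -> R) (C k : R) : Prop :=
  forall J : nat, (0 < J)%N ->
    (\sum_(J <= i <oo) ((th i) ^+ 2)%:E <= (C * (J%:R) `^ (1 - 2 * k))%:E)%E.

Definition Ek (R : realType) (F : Type) (coef : F -> nat -> R) (k A : R) : set F :=
  [set f | forall n : nat, `|coef f n| <= A * (n.+1%:R) `^ (- k)].

Definition Thetak (R : realType) (F : Type) (coef : F -> nat -> R) (k A C : R) : set F :=
  [set f | (forall n : nat, rearr (coef f) n <= A * (n.+1%:R) `^ (- k))
           /\ tail_bound (coef f) C k].

Definition Ak (R : realType) (F : Type) (coef : F -> nat -> R) (k A C : R) : set F :=
  [set f | `|coef f 0%N| <= A /\ tail_bound (coef f) C k].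

From mathcomp Require Import all_boot all_order all_algebra.
From mathcomp Require Import all_classical all_reals all_analysis.
From mathcomp Require Import ring lra.
Set Implicit Arguments. Unset Strict Implicit. Unset Printing Implicit Defensive.
Import Order.TTheory GRing.Theory Num.Theory.
Local Open Scope classical_set_scope.
Local Open Scope ring_scope.

(* For f in E_k the majorant A (j+1)^(-k) of |theta_(j+1)| is nonincreasing,
   so at most n coefficients exceed A (n+1)^(-k) and the rearrangement obeys
   the same bound.  Squaring it and using the convexity estimate
   (2k-1) (i+1)^(-2k) <= i^(1-2k) - (i+1)^(1-2k), the tail from index J
   telescopes to at most A^2/(2k-1) J^(1-2k) <= C J^(1-2k).  For f in Theta_k,
   the largest rearranged coefficient is the supremum of all |theta_j|, which
   is finite because f is square summable; hence |theta_1| <= A. *)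

Lemma ge0_ger_powRN (R : realType) (r x y : R) : 0 <= r -> 0 < x -> x <= y ->
  y `^ (- r) <= x `^ (- r).
Proof.
move=> r0 x0 xy; have y0 : 0 < y by apply: lt_le_trans xy.
rewrite !powRN lef_pV2 ?posrE ?powR_gt0 //.
by apply: ge0_ler_powR => //; rewrite nnegrE ltW.
Qed.

Lemma powRN_sub_ge (R : realType) (p a b : R) : 0 < p -> 0 < a -> a <= b ->
  p * (b - a) * b `^ (- (p + 1)) <= a `^ (- p) - b `^ (- p).
Proof.
move=> p0 a0 ab; have b0 : 0 < b by apply: lt_le_trans ab.
(* a^(-p) = b^(-p) exp(p (ln b - ln a)), and exp x >= 1 + x twice. *)
have ln_gap : (b - a) / b <= ln b - ln a.
  have := expR_ge1Dx (ln a - ln b).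
  rewrite expRD expRN !lnK ?posrE // mulrBl divff ?gt_eqF //.
  have : 0 <= a / b by rewrite divr_ge0 ?ltW.
  lra.
have powa : a `^ (- p) = b `^ (- p) * expR (p * (ln b - ln a)).
  by rewrite /powR !gt_eqF // -expRD; congr expR; ring.
have powb : b `^ (- (p + 1)) = b `^ (- p) / b.
  rewrite /powR gt_eqF // -[X in _ / X]lnK ?posrE // -expRN -expRD.
  by congr expR; ring.
have bp0 : 0 < b `^ (- p) by rewrite powR_gt0.
rewrite powa powb.
have -> : p * (b - a) * (b `^ (- p) / b) = b `^ (- p) * (p * ((b - a) / b)).
  by ring.
rewrite -[X in _ <= _ - X]mulr1 -mulrBr ler_pM2l //.
have := expR_ge1Dx (p * (ln b - ln a)).
have : p * ((b - a) / b) <= p * (ln b - ln a) by rewrite ler_pM2l.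
lra.
Qed.

Lemma nneseries_le_telescope (R : realType) (u g : nat -> R) (c : R) (J : nat) :
  0 <= c -> (forall i, 0 <= u i) -> (forall n, 0 <= g n) ->
  (forall i, (J <= i)%N -> u i <= c * (g i - g i.+1)) ->
  (\sum_(J <= i <oo) (u i)%:E <= (c * g J)%:E)%E.
Proof.
move=> c0 u0 g0 ug.
have cvg_u : cvgn (fun n => (\sum_(J <= i < n) (u i)%:E)%E).
  by apply: is_cvg_nneseries => n _ _; rewrite lee_fin.
apply: (lime_le cvg_u); apply: nearW => N; rewrite sumEFin lee_fin.
have [NJ | JN] := leqP N J.
  by rewrite big_geq // mulr_ge0.
apply: (@le_trans _ _ (\sum_(J <= i < N) c * (g i - g i.+1))).
  by apply: ler_sum_nat => i /andP[Ji _]; apply: ug.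
have -> : \sum_(J <= i < N) c * (g i - g i.+1) = c * (g J - g N).
  rewrite -mulr_sumr -opprB -telescope_sumr ?(ltnW JN) // -sumrN.
  by congr (_ * _); apply: eq_bigr => i _; rewrite opprB.
by rewrite ler_wpM2l // lerBlDr lerDl.
Qed.

Lemma tail_bound_of_norm_le (R : realType) (th : nat -> R) (A k C : R) :
  1 / 2 < k -> A ^+ 2 / (2 * k - 1) <= C ->
  (forall n, `|th n| <= A * n.+1%:R `^ (- k)) -> tail_bound th C k.
Proof.
move=> hk hC hth J J0; set p := 2 * k - 1.
have p0 : 0 < p by rewrite /p; lra.
have c0 : 0 <= A ^+ 2 / p by rewrite divr_ge0 ?sqr_ge0 ?ltW.
have -> : 1 - 2 * k = - p by rewrite /p; ring.
apply: (@le_trans _ (\bar R) (A ^+ 2 / p * J%:R `^ (- p))%:E); last first.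
  by rewrite lee_fin ler_wpM2r ?powR_ge0.
apply: (@nneseries_le_telescope _ (fun i => th i ^+ 2)
  (fun n => n%:R `^ (- p))) => // [i|i Ji]; first exact: sqr_ge0.
have i0 : (0 : R) < i%:R by rewrite ltr0n (leq_trans J0 Ji).
have sq_th : th i ^+ 2 <= A ^+ 2 * i.+1%:R `^ (- (p + 1)).
  have -> : - (p + 1) = - k + - k by rewrite /p; ring.
  rewrite powRD; last by rewrite pnatr_eq0 implybT.
  rewrite -expr2 -exprMn -(real_normK (num_real (th i))).
  by rewrite ler_sqr ?nnegrE ?hth // (le_trans _ (hth i)).
apply: (le_trans sq_th).
rewrite -mulrA ler_wpM2l ?sqr_ge0 // ler_pdivlMl //.
have := powRN_sub_ge p0 i0 (ler_wpDr ler01 (lexx i%:R)).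
by rewrite -natr1 addrAC subrr add0r mulr1.
Qed.

Section Rearrangement.
Variables (R : realType) (th : nat -> R).

Lemma few_exceed_tail (t : R) (n : nat) :
  (forall i, (n <= i)%N -> `|th i| <= t) -> few_exceed th t n.
Proof.
move=> tail; exists (iota 0 n); split; first by rewrite size_iota.
move=> i ti; rewrite mem_iota add0n /= ltnNge; apply/negP => /tail.
by rewrite leNgt ti.
Qed.

Lemma rearr_le (t : R) (n : nat) : 0 <= t -> few_exceed th t n -> rearr th n <= t.
Proof. by move=> t0 ft; apply: ge_inf => //; exists 0 => x []. Qed.

Lemma rearr_le_of_norm_le (b : nat -> R) :
  (forall m n, (m <= n)%N -> b n <= b m) -> (forall n, 0 <= b n) ->
  (forall n, `|th n| <= b n) -> forall n, rearr th n <= b n.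
Proof.
move=> b_noninc b0 thb n; apply: rearr_le => //.
by apply: few_exceed_tail => i ni; apply: le_trans (thb i) (b_noninc _ _ ni).
Qed.

Lemma norm_le_rearr0 : (exists M, forall i, `|th i| <= M) ->
  forall i, `|th i| <= rearr th 0.
Proof.
move=> [M thM] i; apply: lb_le_inf.
  exists M; split; first exact: le_trans (normr_ge0 _) (thM 0%N).
  by exists [::]; split => // j; rewrite ltNge thM.
move=> t [_ [[|? ?] [//= _ t_exceed]]].
by rewrite leNgt; apply/negP => /t_exceed.
Qed.

Lemma bounded_of_square_summable :
  (\sum_(0 <= i <oo) ((th i) ^+ 2)%:E < +oo)%E -> exists M, forall i, `|th i| <= M.
Proof.
move=> fin_sum.
have sum0 : (0 <= \sum_(0 <= i <oo) ((th i) ^+ 2)%:E)%E.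
  by apply: nneseries_ge0 => i _; rewrite lee_fin sqr_ge0.
exists (1 + fine (\sum_(0 <= i <oo) ((th i) ^+ 2)%:E)) => i.
have term_le : th i ^+ 2 <= fine (\sum_(0 <= i <oo) ((th i) ^+ 2)%:E).
  rewrite -lee_fin fineK ?ge0_fin_numE //.
  apply: le_trans (nneseries_lim_ge i.+1 _); last first.
    by move=> j _ _; rewrite lee_fin sqr_ge0.
  rewrite sumEFin lee_fin big_nat_recr //= lerDr.
  by apply: sumr_ge0 => j _; rewrite sqr_ge0.
have := sqr_ge0 (`|th i| - 1 / 2); rewrite -(real_normK (num_real (th i))) in term_le.
nra.
Qed.

End Rearrangement.

Theorem lemma2 (R : realType) (F : Type) (coef : F -> nat -> R)
  (hL2 : forall f : F, (\sum_(0 <= i <oo) ((coef f i) ^+ 2)%:E < +oo)%E)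
  (A k C : R) (hA : 0 < A) (hk : 1 / 2 < k) (hC : A ^+ 2 / (2 * k - 1) <= C) :
  Ek coef k A `<=` Thetak coef k A C /\ Thetak coef k A C `<=` Ak coef k A C.
Proof.
split => f.
  move=> hf; split; last exact: tail_bound_of_norm_le hf.
  apply: rearr_le_of_norm_le hf => [m n mn|n]; last by rewrite mulr_ge0 ?ltW ?powR_ge0.
  rewrite ler_wpM2l ?(ltW hA) //; apply: ge0_ger_powRN; rewrite ?ltr0n ?ler_nat //; lra.
move=> [rearr_bound tail]; split => //.
have := rearr_bound 0%N; rewrite powR1 mulr1; apply: le_trans.
exact/norm_le_rearr0/bounded_of_square_summable.
Qed.
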